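(* Let $G=(V,E)$ be a graph, $v,u$ two non-adjacent vertices of $G$, and $k$ an integer. For any $c,q\in[k]$ with $c\ne q$, the sets $S(c,c)$ and $S(q,c)$ (defined in the context) are isomorphic, and the map $H(\cdot,q):S(c,c)\to S(q,c)$ is a bijection.
   Context: $[k]=\{1,\dots,k\}$; $\Omega$ is the set of proper $k$-colourings of $G$, $\sigma_w$ the colour of $w$ under $\sigma$, and $\Omega(c,q)\subseteq\Omega$ the colourings with $\sigma_v=c$ and $\sigma_u=q$. For $\sigma\in\Omega$ and $q\in[k]\setminus\{\sigma_v\}$, the disagreement graph $Q_{\sigma_v,q}$ is the subgraph of $G$ induced by all vertices $x$ such that there is a path $v=w_0,\dots,w_t=x$ in $G$ with $\sigma_{w_j}\in\{\sigma_v,q\}$ for all $j$. The $q$-switching $H(\sigma,q)$ is obtained from $\sigma$ by recolouring with $q$ every vertex of $Q_{\sigma_v,q}$ coloured $\sigma_v$ and recolouring with $\sigma_v$ every vertex of $Q_{\sigma_v,q}$ coloured $q$, all other vertices keeping their colour. $S(c,c)$ is the set of $\sigma\in\Omega(c,c)$ such that $u\notin Q_{\sigma_v,q}$; $S(q,c)$ is the set of $\sigma\in\Omega(q,c)$ such that $u\notin Q_{\sigma_v,c}$. Two sets are isomorphic if there is a bijection between them. *)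

From mathcomp Require Import all_boot.
Set Implicit Arguments. Unset Strict Implicit. Unset Printing Implicit Defensive.

(* A simple graph on the finite vertex type T is a symmetric irreflexive
   relation e.  Colours [k] are represented by 'I_k. *)

Definition colouring (T : finType) (k : nat) := {ffun T -> 'I_k}.

Definition proper (T : finType) (e : rel T) (k : nat) (s : {ffun T -> 'I_k}) :=
  [forall x, forall y, e x y ==> (s x != s y)].

Definition Omega_cq (T : finType) (e : rel T) (k : nat) (v u : T) (c q : 'I_k)
  : {set {ffun T -> 'I_k}} :=
  [set s | proper e s && (s v == c) && (s u == q)].

Definition dis_rel (T : finType) (e : rel T) (k : nat) (s : {ffun T -> 'I_k})
  (a q : 'I_k) : rel T :=
  [rel x y | [&& e x y, (s x == a) || (s x == q) & (s y == a) || (s y == q)]].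

Definition Qset (T : finType) (e : rel T) (k : nat) (v : T)
  (s : {ffun T -> 'I_k}) (q : 'I_k) : {set T} :=
  [set x | connect (dis_rel e s (s v) q) v x].

Definition Hswitch (T : finType) (e : rel T) (k : nat) (v : T)
  (s : {ffun T -> 'I_k}) (q : 'I_k) : {ffun T -> 'I_k} :=
  [ffun x => if x \in Qset e v s q then
               (if s x == s v then q else if s x == q then s v else s x)
             else s x].

Definition S_cc (T : finType) (e : rel T) (k : nat) (v u : T) (c q : 'I_k)
  : {set {ffun T -> 'I_k}} :=
  [set s in Omega_cq e v u c c | u \notin Qset e v s q].

Definition S_qc (T : finType) (e : rel T) (k : nat) (v u : T) (c q : 'I_k)
  : {set {ffun T -> 'I_k}} :=
  [set s in Omega_cq e v u q c | u \notin Qset e v s c].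

(* On the Kempe chain Q of v the q-switching acts on colours as the
   transposition (s v, q), and it leaves the chain itself in place: a vertex
   has colour in {s v, q} before the switch iff it does after.  Hence switching
   the result on colour s v undoes it, properness is kept (an edge leaving the
   chain ends at a colour outside {s v, q}), and u, lying outside the chain,
   keeps its colour. *)
From Pilot Require Import Defs.
From mathcomp Require Import all_boot fingroup perm.
Set Implicit Arguments. Unset Strict Implicit. Unset Printing Implicit Defensive.

Lemma tperm_pair (X : finType) (a b x : X) :
  (tperm a b x == a) || (tperm a b x == b) = (x == a) || (x == b).
Proof. by case: tpermP => [->|->|//]; rewrite !eqxx ?orbT. Qed.

Section KempeSwitch.
Variables (T : finType) (e : rel T) (k : nat) (v : T).
Implicit Types (s : {ffun T -> 'I_k}) (b : 'I_k).

Local Notation Q := (Qset e v).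
Local Notation H := (Hswitch e v).

Lemma Qset_colour s b x : x \in Q s b -> (s x == s v) || (s x == b).
Proof.
rewrite inE => /connectP [p pP ->]; set a := s v in pP *.
have : (s v == a) || (s v == b) by rewrite eqxx.
elim: p (v) pP => [|z p IHp] y //= /andP [/and3P [_ _ sz] pP] _.
exact: IHp.
Qed.

Lemma Qset_closed s b x y :
  x \in Q s b -> e x y -> (s y == s v) || (s y == b) -> y \in Q s b.
Proof.
move=> Qx exy sy; move: (Qx); rewrite !inE => /connect_trans; apply.
by apply: connect1; rewrite /dis_rel /= exy sy Qset_colour.
Qed.

Lemma Qset_root s b : v \in Q s b.
Proof. by rewrite inE connect0. Qed.

Lemma HswitchE s b x : H s b x = if x \in Q s b then tperm (s v) b (s x) else s x.
Proof.
rewrite ffunE; case: ifP => // _.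
by case: tpermP => [->|->|/eqP/negbTE-> /eqP/negbTE->]; rewrite ?eqxx //; case: eqP.
Qed.

Lemma Hswitch_out s b x : x \notin Q s b -> H s b x = s x.
Proof. by rewrite HswitchE => /negbTE ->. Qed.

Lemma Hswitch_root s b : H s b v = b.
Proof. by rewrite HswitchE Qset_root tpermL. Qed.

Lemma Hswitch_pair s b x :
  (H s b x == b) || (H s b x == s v) = (s x == s v) || (s x == b).
Proof. by rewrite HswitchE orbC; case: ifP => // _; rewrite tperm_pair. Qed.

Lemma Qset_Hswitch s b : Q (H s b) (s v) = Q s b.
Proof.
apply/setP => x; rewrite !inE Hswitch_root.
by apply: eq_connect => y z; rewrite /dis_rel /= !Hswitch_pair.
Qed.

Lemma HswitchK s b : H (H s b) (s v) = s.
Proof.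
apply/ffunP => x; rewrite HswitchE Qset_Hswitch Hswitch_root.
by case: ifPn => Qx; rewrite HswitchE ?(negbTE Qx) ?Qx // tpermC tpermK.
Qed.

Lemma Hswitch_proper s b : symmetric e -> Defs.proper e s -> Defs.proper e (H s b).
Proof.
move=> e_sym sP; apply/forallP => x; apply/forallP => y; apply/implyP => exy.
have sxy : s x != s y := implyP (forallP (forallP sP x) y) exy.
have leave z w : z \in Q s b -> w \notin Q s b -> e z w -> H s b z != H s b w.
  move=> Qz Qw ezw; rewrite (Hswitch_out Qw); apply: contraNneq Qw => E.
  by apply: (Qset_closed Qz ezw); rewrite -E orbC Hswitch_pair Qset_colour.
case: (boolP (x \in Q s b)) => Qx; case: (boolP (y \in Q s b)) => Qy.
- by rewrite !HswitchE Qx Qy (inj_eq perm_inj).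
- exact: leave.
- by rewrite eq_sym leave // e_sym.
- by rewrite !Hswitch_out.
Qed.

(* [Omega_sep u a d b]: v coloured a, u coloured d, u outside the (a,b)-chain
   of v; S(c,c) is [Omega_sep u c c q] and S(q,c) is [Omega_sep u q c c]. *)
Definition Omega_sep (u : T) (a d b : 'I_k) : {set {ffun T -> 'I_k}} :=
  [set s in Omega_cq e v u a d | u \notin Q s b].

Lemma Omega_sep_root u a d b s : s \in Omega_sep u a d b -> s v = a.
Proof. by rewrite !in_set => /andP [/andP [/andP [_ /eqP]]]. Qed.

Lemma Hswitch_Omega_sep u a d b s : symmetric e ->
  s \in Omega_sep u a d b -> H s b \in Omega_sep u b d a.
Proof.
move=> e_sym; have /setP/(_ u) := Qset_Hswitch s b; rewrite !in_set.
move=> QH /andP [/andP [/andP [sP /eqP sv] /eqP su] Qu].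
rewrite Hswitch_root in QH *.
by rewrite -sv QH Qu Hswitch_proper // Hswitch_out ?in_set // su !eqxx.
Qed.

End KempeSwitch.

Theorem lemma2 (T : finType) (e : rel T) (k : nat) (v u : T)
  (e_sym : symmetric e) (e_irr : irreflexive e)
  (vu_neq : v != u) (vu_nadj : ~~ e v u)
  (c q : 'I_k) (cq : c != q) :
  (exists f : {ffun T -> 'I_k} -> {ffun T -> 'I_k},
     [/\ {in S_cc e v u c q, forall s, f s \in S_qc e v u c q},
         {in S_cc e v u c q &, injective f}
       & {in S_qc e v u c q, forall t, exists2 s, s \in S_cc e v u c q & f s = t}])
  /\ [/\ {in S_cc e v u c q, forall s, Hswitch e v s q \in S_qc e v u c q},
         {in S_cc e v u c q &, injective (fun s => Hswitch e v s q)}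
       & {in S_qc e v u c q, forall t,
            exists2 s, s \in S_cc e v u c q & Hswitch e v s q = t}].
Proof.
have bij : [/\ {in S_cc e v u c q, forall s, Hswitch e v s q \in S_qc e v u c q},
    {in S_cc e v u c q &, injective (fun s => Hswitch e v s q)}
  & {in S_qc e v u c q, forall t,
       exists2 s, s \in S_cc e v u c q & Hswitch e v s q = t}].
  split=> [s Ss | s1 s2 Ss1 Ss2 /= E | t St].
  - exact: Hswitch_Omega_sep.
  - by rewrite -(HswitchK e v s1 q) -(HswitchK e v s2 q) E
      (Omega_sep_root Ss1) (Omega_sep_root Ss2).
  - exists (Hswitch e v t c); first exact: Hswitch_Omega_sep.
    by rewrite -{1}(Omega_sep_root St) HswitchK.
by split=> //; exists (fun s => Hswitch e v s q).
Qed.
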